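(* Let $\mathcal X=\mathbb C^n$ and let $\lambda:\mathrm{Dens}(\mathcal X)\to\mathbb R^n$ map a density matrix to its vector of eigenvalues in decreasing order, regarded as a quantum property. Then $\mathrm{elic}_Q(\lambda)=n^2-1$.
   Context: $\mathrm{Herm}(\mathcal X)$ Hermitian matrices with $\langle X,Y\rangle=\mathrm{Tr}(X^*Y)$; $\mathrm{Dens}(\mathcal X)$ density matrices. A quantum property is a map $\Gamma:\mathrm{Dens}(\mathcal X)\to\mathcal R$. It is elicitable if there is a quantum score $S=(s,\mu)$, $s:\mathcal R\times\mathbb N\to\mathbb R$, $\mu(r)$ a measurement (finite family of positive semidefinite operators summing to $I$), with $\{\Gamma(\rho)\}=\arg\max_{r\in\mathcal R}\sum_y\langle\mu(r)_y,\rho\rangle s(r,y)$ for all $\rho$. $\hat\Gamma:\mathrm{Dens}(\mathcal X)\to\mathbb R^k$ is identifiable if for each $r$ in its range there is $V(r)\in\mathrm{Herm}(\mathcal X)^k$ with $\hat\Gamma(\rho)=r\iff\langle V(r)_i,\rho\rangle=0$ for all $i$. $\Gamma$ is $k$-elicitable if $\Gamma=\psi\circ\hat\Gamma$ for some elicitable and identifiable $\hat\Gamma:\mathrm{Dens}(\mathcal X)\to\mathbb R^k$ and some $\psi:\mathbb R^k\to\mathcal R$; $\mathrm{elic}_Q(\Gamma)$ is the least such $k$. *)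

(* C^n is modelled with complex numbers R[i] over an
   arbitrary realType R (any realType is isomorphic to the reals). *)
From HB Require Import structures.
From mathcomp Require Import all_boot all_order all_algebra.
From mathcomp Require Import complex.
From mathcomp Require Import boolp classical_sets reals.
Set Implicit Arguments. Unset Strict Implicit. Unset Printing Implicit Defensive.
Import Order.TTheory GRing.Theory Num.Theory.
Local Open Scope ring_scope.

Section Quantum.
Variables (R : realType) (n : nat).
Local Notation C := (R[i]).
Local Notation Mat := ('M[C]_n).

Definition adjmx (m p : nat) (X : 'M[C]_(m, p)) : 'M[C]_(p, m) :=
  map_mx Num.conj X^T.

Definition hermitian (A : Mat) : Prop := adjmx A = A.

(* <X,Y> = Tr(X^* Y); real-valued on Herm(X) (we take the real part). *)
Definition inner (X Y : Mat) : R := complex.Re (\tr (adjmx X *m Y)).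

Definition psd (A : Mat) : Prop :=
  hermitian A /\ forall v : 'cV[C]_n, 0 <= (adjmx v *m A *m v) 0 0.

Definition density (A : Mat) : Prop := psd A /\ \tr A = 1.

(* a measurement: a finite family (mu_0, ..., mu_{m-1}) of PSD operators
   summing to the identity; outcome y is the index in the list *)
Definition measurement (mu : seq Mat) : Prop :=
  (forall y, (y < size mu)%N -> psd (nth 0 mu y)) /\ \sum_(M <- mu) M = 1%:M.

Definition exp_score (T : Type) (s : T -> nat -> R) (mu : T -> seq Mat)
  (r : T) (rho : Mat) : R :=
  \sum_(y < size (mu r)) inner (nth 0 (mu r) y) rho * s r y.

Definition elicitable (T : Type) (G : Mat -> T) : Prop :=
  exists (s : T -> nat -> R) (mu : T -> seq Mat),
    (forall r, measurement (mu r)) /\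
    forall rho, density rho ->
      forall r, r <> G rho -> exp_score s mu r rho < exp_score s mu (G rho) rho.

Definition identifiable (k : nat) (G : Mat -> 'rV[R]_k) : Prop :=
  forall r, (exists rho0, density rho0 /\ G rho0 = r) ->
    exists V : 'I_k -> Mat, (forall i, hermitian (V i)) /\
      forall rho, density rho -> (G rho = r <-> forall i, inner (V i) rho = 0).

Definition k_elicitable (T : Type) (G : Mat -> T) (k : nat) : Prop :=
  exists (Gh : Mat -> 'rV[R]_k) (psi : 'rV[R]_k -> T),
    elicitable Gh /\ identifiable Gh /\
    forall rho, density rho -> G rho = psi (Gh rho).

Definition elicQ_eq (T : Type) (G : Mat -> T) (k : nat) : Prop :=
  k_elicitable G k /\ forall k', k_elicitable G k' -> (k <= k')%N.

(* the vector of eigenvalues (with algebraic multiplicity) in decreasing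
   order: the (unique, for Hermitian A) real row vector v, decreasing, with
   char_poly A = prod_i (X - v_i). *)
Definition eigvals_decr (A : Mat) : 'rV[R]_n :=
  xget 0 [set v : 'rV[R]_n |
    (forall i j : 'I_n, (i <= j)%N -> v 0 j <= v 0 i) /\
    char_poly A = \prod_(i < n) ('X - ((v 0 i)%:C%C)%:P)].

End Quantum.

(* Let E_1, ..., E_{n^2-1} be the Hermitian matrices
   e_ab + e_ba (a < b), i e_ab - i e_ba (a > b) and e_aa (a < n-1).  The real
   coordinates <E_i, rho> determine a traceless Hermitian matrix, hence they
   determine a density matrix rho among all density matrices, so the spectrum
   factors through rho |-> (<E_i, rho>)_i.  This vector is identifiable
   (V(r)_i = E_i - r_i I) and elicitable by the quadratic score
   sum_i (2 r_i <E_i, rho> - r_i^2), which any Hermitian observable A can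
   realise with the two-outcome measurement t(cI + A), t(cI - A).

   Suppose lambda = psi o Gh with Gh identifiable into R^k and
   k < n^2 - 1.  At the maximally mixed state rho0 = I/n, the k identification
   matrices and I impose k + 1 < n^2 linear conditions, so some nonzero
   traceless Hermitian H is orthogonal to all of them.  For small t > 0 the
   matrix rho0 + tH is a density with Gh(rho0 + tH) = Gh(rho0), hence with
   spectrum (1/n, ..., 1/n); Cayley-Hamilton then makes tH nilpotent, and a
   nilpotent Hermitian matrix is 0, a contradiction. *)

From Pilot Require Import Defs.
From mathcomp Require Import all_boot all_order all_algebra.
From mathcomp Require Import complex.
From mathcomp Require Import boolp classical_sets reals.
From mathcomp Require Import ring lra zify.
Set Implicit Arguments. Unset Strict Implicit. Unset Printing Implicit Defensive.
Import Order.TTheory GRing.Theory Num.Theory.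
Local Open Scope ring_scope.

(* the name [hermitian] is also a notation of mathcomp's sesquilinear.v *)
Local Notation herm := Pilot.Defs.hermitian.

Section Adjoint.
Variable R : realType.
Local Notation C := (R[i]).

Lemma adjmxE m p (X : 'M[C]_(m, p)) i j : adjmx X i j = (X j i)^*.
Proof. by rewrite /adjmx !mxE. Qed.

Lemma adjmxD m p (X Y : 'M[C]_(m, p)) : adjmx (X + Y) = adjmx X + adjmx Y.
Proof. by rewrite /adjmx linearD map_mxD. Qed.

Lemma adjmxN m p (X : 'M[C]_(m, p)) : adjmx (- X) = - adjmx X.
Proof. by rewrite /adjmx linearN map_mxN. Qed.

Lemma adjmxB m p (X Y : 'M[C]_(m, p)) : adjmx (X - Y) = adjmx X - adjmx Y.
Proof. by rewrite adjmxD adjmxN. Qed.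

Lemma adjmxZ m p (c : C) (X : 'M[C]_(m, p)) : adjmx (c *: X) = c^* *: adjmx X.
Proof. by rewrite /adjmx linearZ map_mxZ. Qed.

Lemma adjmxK m p (X : 'M[C]_(m, p)) : adjmx (adjmx X) = X.
Proof. by apply/matrixP=> i j; rewrite !adjmxE conjCK. Qed.

Lemma adjmxM m p q (X : 'M[C]_(m, p)) (Y : 'M[C]_(p, q)) :
  adjmx (X *m Y) = adjmx Y *m adjmx X.
Proof. by rewrite /adjmx trmx_mul map_mxM. Qed.

Lemma adjmx_scalar k (c : C) : adjmx (c%:M : 'M[C]_k) = c^*%:M.
Proof. by rewrite /adjmx tr_scalar_mx map_scalar_mx. Qed.

Lemma adjmx_delta m p (a : 'I_m) (b : 'I_p) :
  adjmx (delta_mx a b : 'M[C]_(m, p)) = delta_mx b a.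
Proof. by rewrite /adjmx trmx_delta map_delta_mx. Qed.

Lemma mxtrace_adj k (M : 'M[C]_k) : \tr (adjmx M) = (\tr M)^*.
Proof. by rewrite /adjmx trace_map_mx mxtrace_tr. Qed.

Lemma Re_add (x y : C) : complex.Re (x + y) = complex.Re x + complex.Re y.
Proof. by case: x; case: y. Qed.

Lemma Re_opp (x : C) : complex.Re (- x) = - complex.Re x.
Proof. by case: x. Qed.

Lemma Re_realM (t : R) (z : C) : complex.Re (t%:C%C * z) = t * complex.Re z.
Proof. by case: z => a b /=; rewrite mul0r subr0. Qed.

Lemma conj_realC (t : R) : (t%:C%C)^* = t%:C%C :> C.
Proof. by rewrite conj_Creal // complex_real. Qed.

Lemma conj_i : ('i%C : C)^* = - 'i%C.
Proof. by apply/eqP; rewrite eq_complex /= oppr0 !eqxx. Qed.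

Lemma normC_Re (z : C) : `|z| = (complex.Re `|z|)%:C%C.
Proof. by rewrite RRe_real // normr_real. Qed.

Lemma norm_realC (t : R) : `|t%:C%C| = (`|t|)%:C%C :> C.
Proof. by rewrite normc_def /= expr0n /= addr0 sqrtr_sqr. Qed.

Lemma Re_norm_ge0 (z : C) : 0 <= complex.Re `|z|.
Proof. by rewrite -lecR -normC_Re normr_ge0. Qed.

End Adjoint.

Section Hermitian.
Variables (R : realType) (n : nat).
Local Notation C := (R[i]).
Local Notation Mat := ('M[C]_n).

Lemma hermE (Z : Mat) : herm Z -> forall a b, Z b a = (Z a b)^*.
Proof. by move=> hZ a b; rewrite -{1}hZ adjmxE. Qed.

Lemma herm_add (X Y : Mat) : herm X -> herm Y -> herm (X + Y).
Proof. by rewrite /herm adjmxD => -> ->. Qed.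

Lemma herm_opp (X : Mat) : herm X -> herm (- X).
Proof. by rewrite /herm adjmxN => ->. Qed.

Lemma herm_sub (X Y : Mat) : herm X -> herm Y -> herm (X - Y).
Proof. by move=> hX /herm_opp; apply: herm_add. Qed.

Lemma herm_scale (t : R) (X : Mat) : herm X -> herm (t%:C%C *: X).
Proof. by rewrite /herm adjmxZ conj_realC => ->. Qed.

Lemma herm_scalar (t : R) : herm (t%:C%C%:M : Mat).
Proof. by rewrite /herm adjmx_scalar conj_realC. Qed.

Lemma herm1 : herm (1%:M : Mat).
Proof. by rewrite /herm adjmx_scalar rmorph1. Qed.

Lemma herm_sum I (r : seq I) (P : pred I) (F : I -> Mat) :
  (forall i, herm (F i)) -> herm (\sum_(i <- r | P i) F i).
Proof.
move=> hF; elim/big_rec: _ => [|i x _]; last exact/herm_add.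
by rewrite /herm /adjmx trmx0 map_mx0.
Qed.

Lemma herm_expr (H : Mat) k : herm H -> herm (H ^+ k).
Proof.
move=> hH; elim: k => [|k IH]; first by rewrite expr0; exact: herm1.
rewrite /herm in hH IH *.
by rewrite exprS -mulmxE adjmxM IH hH mulmxE -exprSr -exprS.
Qed.

Lemma innerDl (X Y Z : Mat) : inner (X + Y) Z = inner X Z + inner Y Z.
Proof. by rewrite /inner adjmxD mulmxDl mxtraceD Re_add. Qed.

Lemma innerDr (X Y Z : Mat) : inner X (Y + Z) = inner X Y + inner X Z.
Proof. by rewrite /inner mulmxDr mxtraceD Re_add. Qed.

Lemma innerNl (X Z : Mat) : inner (- X) Z = - inner X Z.
Proof. by rewrite /inner adjmxN mulNmx raddfN Re_opp. Qed.

Lemma innerNr (X Z : Mat) : inner X (- Z) = - inner X Z.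
Proof. by rewrite /inner mulmxN raddfN Re_opp. Qed.

Lemma innerBl (X Y Z : Mat) : inner (X - Y) Z = inner X Z - inner Y Z.
Proof. by rewrite innerDl innerNl. Qed.

Lemma innerBr (X Y Z : Mat) : inner X (Y - Z) = inner X Y - inner X Z.
Proof. by rewrite innerDr innerNr. Qed.

Lemma innerZl (t : R) (X Z : Mat) : inner (t%:C%C *: X) Z = t * inner X Z.
Proof. by rewrite /inner adjmxZ conj_realC -scalemxAl mxtraceZ Re_realM. Qed.

Lemma innerZr (t : R) (X Z : Mat) : inner X (t%:C%C *: Z) = t * inner X Z.
Proof. by rewrite /inner -scalemxAr mxtraceZ Re_realM. Qed.

Lemma inner_suml I (r : seq I) (P : pred I) (F : I -> Mat) Z :
  inner (\sum_(i <- r | P i) F i) Z = \sum_(i <- r | P i) inner (F i) Z.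
Proof.
elim/big_rec2: _ => [|i x y _ <-]; last by rewrite innerDl.
by rewrite /inner /adjmx trmx0 map_mx0 mul0mx mxtrace0.
Qed.

Lemma inner_density (Z : Mat) : density Z -> inner 1%:M Z = 1.
Proof. by case=> _ trZ; rewrite /inner adjmx_scalar rmorph1 mul1mx trZ. Qed.

Lemma mxtrace_adj_delta (a b : 'I_n) (Z : Mat) :
  \tr (adjmx (delta_mx a b) *m Z) = Z a b.
Proof.
rewrite adjmx_delta /mxtrace (bigD1 b) //= big1 ?addr0.
  rewrite mxE (bigD1 a) //= big1 ?addr0; first by rewrite !mxE !eqxx mul1r.
  by move=> k /negbTE ka; rewrite !mxE ka andbF mul0r.
by move=> i /negbTE ib; rewrite mxE big1 // => k _; rewrite !mxE ib mul0r.
Qed.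

End Hermitian.

Section PositiveSemidefinite.
Variables (R : realType) (n : nat).
Local Notation C := (R[i]).
Local Notation Mat := ('M[C]_n).

(* the entrywise l1 norm |B|_1, a crude bound for the spectral radius *)
Definition l1norm (B : Mat) : R := \sum_x \sum_y complex.Re `|B x y|.

Lemma l1norm_ge0 (B : Mat) : 0 <= l1norm B.
Proof. by rewrite !sumr_ge0 // => x _; rewrite sumr_ge0 // => y _; exact: Re_norm_ge0. Qed.

Lemma l1normN (B : Mat) : l1norm (- B) = l1norm B.
Proof. by apply: eq_bigr => x _; apply: eq_bigr => y _; rewrite mxE normrN. Qed.

Lemma l1normZ (t : R) (B : Mat) : 0 <= t -> l1norm (t%:C%C *: B) = t * l1norm B.
Proof.
move=> t0; rewrite /l1norm mulr_sumr; apply: eq_bigr => x _.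
rewrite mulr_sumr; apply: eq_bigr => y _.
by rewrite mxE normrM norm_realC (ger0_norm t0) Re_realM.
Qed.

Lemma qformE (v : 'cV[C]_n) (B : Mat) :
  (adjmx v *m B *m v) 0 0 = \sum_x \sum_y (v x 0)^* * B x y * v y 0.
Proof.
rewrite mxE exchange_big /=; apply: eq_bigr => y _.
by rewrite mxE mulr_suml; apply: eq_bigr => x _; rewrite adjmxE.
Qed.

Lemma qform_real (v : 'cV[C]_n) (B : Mat) : herm B ->
  (adjmx v *m B *m v) 0 0 = (complex.Re ((adjmx v *m B *m v) 0 0))%:C%C.
Proof.
move=> hB; rewrite RRe_real // CrealE; apply/eqP.
by rewrite -adjmxE !adjmxM adjmxK hB mulmxA.
Qed.

(* |v^* B v| <= |B|_1 |v|^2, from |v_x| |v_y| <= |v|^2 *)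
Lemma qform_bound (v : 'cV[C]_n) (B : Mat) :
  `|(adjmx v *m B *m v) 0 0| <=
  (l1norm B * \sum_z complex.Re `|v z 0| ^+ 2)%:C%C.
Proof.
set S := \sum_z _; have sq_le z : complex.Re `|v z 0| ^+ 2 <= S.
  by rewrite /S (bigD1 z) //= lerDl sumr_ge0 // => i _; rewrite sqr_ge0.
rewrite qformE; apply: le_trans (ler_norm_sum _ _ _) _.
rewrite /l1norm mulr_suml rmorph_sum; apply: ler_sum => x _.
apply: le_trans (ler_norm_sum _ _ _) _.
rewrite mulr_suml rmorph_sum; apply: ler_sum => y _.
rewrite !normrM norm_conjC (normC_Re (v x 0)) (normC_Re (v y 0)).
rewrite (normC_Re (B x y)) -!rmorphM lecR.
set ax := complex.Re `|v x 0|; set ay := complex.Re `|v y 0|.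
have hxy : ax * ay <= S.
  have := sq_le x; have := sq_le y.
  have := Re_norm_ge0 (v x 0); have := Re_norm_ge0 (v y 0); nra.
have := Re_norm_ge0 (B x y); nra.
Qed.

(* diagonal dominance: c I + B is positive semidefinite once c >= |B|_1 *)
Lemma psd_add_scalar (B : Mat) (c : R) : herm B -> l1norm B <= c ->
  psd (c%:C%C%:M + B).
Proof.
move=> hB hc; split; first by apply: herm_add => //; exact: herm_scalar.
move=> v; set S := \sum_z complex.Re `|v z 0| ^+ 2.
have S0 : 0 <= S by rewrite sumr_ge0 // => z _; rewrite sqr_ge0.
have vv : (adjmx v *m v) 0 0 = S%:C%C.
  rewrite mxE rmorph_sum; apply: eq_bigr => z _.
  by rewrite adjmxE -normCKC normC_Re rmorphXn.
have hq : `|complex.Re ((adjmx v *m B *m v) 0 0)| <= l1norm B * S.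
  by rewrite -lecR -norm_realC -qform_real // qform_bound.
have -> : adjmx v *m (c%:C%C%:M + B) *m v
    = c%:C%C *: (adjmx v *m v) + adjmx v *m B *m v.
  by rewrite mulmxDr mulmxDl mul_mx_scalar -scalemxAl.
rewrite mxE [X in 0 <= X + _]mxE vv qform_real // -rmorphM -rmorphD ler0c.
move: hq; rewrite ler_norml => /andP [hq _].
have := l1norm_ge0 B; nra.
Qed.

Lemma psd_scale (t : R) (B : Mat) : 0 <= t -> psd B -> psd (t%:C%C *: B).
Proof.
move=> t0 [hB hq]; split; first exact: herm_scale.
by move=> v; rewrite -scalemxAr -scalemxAl mxE mulr_ge0 // ler0c.
Qed.

End PositiveSemidefinite.

Section LinearScores.
Variables (R : realType) (n : nat).
Local Notation C := (R[i]).
Local Notation Mat := ('M[C]_n).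

(* every Hermitian family of observables A(r) is the expected score of a
   two-outcome measurement: outcome 0 of t(cI + A) pays c, outcome 1 of
   t(cI - A) pays -c, where c > |A|_1 and t = 1/(2c) *)
Lemma linear_score_realizable (T : Type) (A : T -> Mat) :
  (forall r, herm (A r)) ->
  exists (s : T -> nat -> R) (mu : T -> seq Mat),
    (forall r, measurement (mu r)) /\
    forall r rho, exp_score s mu r rho = inner (A r) rho.
Proof.
move=> hA.
pose c r := l1norm (A r) + 1.
have c0 r : 0 < c r by rewrite ltr_wpDl ?l1norm_ge0.
have cle r : l1norm (A r) <= c r by rewrite lerDl.
have cleN r : l1norm (- A r) <= c r by rewrite l1normN.
pose t r := (2 * c r)^-1.
have t0 r : 0 <= t r by rewrite invr_ge0 mulr_ge0 // ltW.
have tc r : t r * (c r + c r) = 1 by have := c0 r; rewrite /t => ?; field; lra.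
pose M0 r := (t r)%:C%C *: ((c r)%:C%C%:M + A r).
pose M1 r := (t r)%:C%C *: ((c r)%:C%C%:M - A r).
exists (fun r y => if y == 0%N then c r else - c r), (fun r => [:: M0 r; M1 r]).
split=> [r|r rho]; last first.
  rewrite /exp_score /= !big_ord_recl big_ord0 /= /M0 /M1 !innerZl.
  by rewrite innerDl innerBl -[RHS]mul1r -(tc r); ring.
split=> [[|[|y]] //= _|].
- by apply/psd_scale/psd_add_scalar.
- by apply/psd_scale/psd_add_scalar => //; exact: herm_opp.
rewrite !big_cons big_nil addr0 -scalerDr addrACA subrr addr0.
by rewrite -raddfD scale_scalar_mx -!rmorphD -rmorphM tc rmorph1.
Qed.

End LinearScores.

Section HermitianBasis.
Variables (R : realType) (n : nat).
Local Notation C := (R[i]).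
Local Notation Mat := ('M[C]_n).

(* the standard real basis of Hermitian matrices: the pairings with
   basis_mx a b read off Re Z_ab (a < b), Im Z_ab (a > b) and Z_aa *)
Definition basis_mx (a b : 'I_n) : Mat :=
  if (a < b)%N then delta_mx a b + delta_mx b a
  else if (b < a)%N then 'i%C *: delta_mx a b - 'i%C *: delta_mx b a
  else delta_mx a a.

Lemma basis_mx_herm a b : herm (basis_mx a b).
Proof.
rewrite /herm /basis_mx; case: ltnP => ab; first by rewrite adjmxD !adjmx_delta addrC.
case: ltnP => ba; last by rewrite adjmx_delta.
by rewrite adjmxB !adjmxZ !adjmx_delta conj_i !scaleNr opprK addrC.
Qed.

Lemma inner_basis_mx (Z : Mat) a b : herm Z ->
  inner (basis_mx a b) Z =
  if (a < b)%N then 2 * complex.Re (Z a b)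
  else if (b < a)%N then 2 * complex.Im (Z a b)
  else complex.Re (Z a a).
Proof.
move=> hZ; rewrite /basis_mx /inner; have Zba := hermE hZ a b.
case: ltnP => ab.
  rewrite adjmxD mulmxDl mxtraceD !mxtrace_adj_delta Zba.
  by case: (Z a b) => x y /=; lra.
case: ltnP => ba; last by rewrite mxtrace_adj_delta.
rewrite adjmxB !adjmxZ mulmxBl -!scalemxAl mxtraceD raddfN /= !mxtraceZ.
by rewrite !mxtrace_adj_delta Zba conj_i; case: (Z a b) => x y /=; lra.
Qed.

Lemma basis_mx_coords0 (l : 'I_n) (Z : Mat) : herm Z -> \tr Z = 0 ->
  (forall a b, ~~ ((a == l) && (b == l)) -> inner (basis_mx a b) Z = 0) -> Z = 0.
Proof.
move=> hZ trZ hE.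
have offdiag (x y : 'I_n) : (x < y)%N -> Z x y = 0.
  move=> xy; have xyl : ~~ ((x == l) && (y == l)).
    by apply: contraTN xy => /andP [/eqP -> /eqP ->]; rewrite ltnn.
  have := hE x y xyl; have := hE y x; rewrite andbC => /(_ xyl).
  rewrite !inner_basis_mx // ltnNge (ltnW xy) /= xy (hermE hZ x y).
  case: (Z x y) => p q /= e1 e2; apply/eqP; rewrite eq_complex /=.
  by apply/andP; split; apply/eqP; lra.
have diag (x : 'I_n) : x != l -> Z x x = 0.
  move=> xl; have := hE x x; rewrite (negbTE xl) inner_basis_mx // ltnn => /(_ isT).
  move: (hermE hZ x x); case: (Z x x) => p q [] /= e1 e2.
  by apply/eqP; rewrite eq_complex /=; apply/andP; split; apply/eqP; lra.
have diagl : Z l l = 0.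
  by move: trZ; rewrite /mxtrace (bigD1 l) //= big1 ?addr0 // => x /diag.
apply/matrixP => x y; rewrite mxE; case: (ltngtP x y) => xy; first exact: offdiag.
  by rewrite hermE // offdiag // rmorph0.
have -> : y = x by apply: val_inj.
by case: (eqVneq x l) => [->|/diag].
Qed.

End HermitianBasis.

Section NilpotentHermitian.
Variables (R : realType) (n : nat).
Local Notation C := (R[i]).
Local Notation Mat := ('M[C]_n).

(* tr (H^* H) is the sum of the squared moduli of the entries of H *)
Lemma herm_sqr_eq0 (H : Mat) : herm H -> H ^+ 2 = 0 -> H = 0.
Proof.
move=> hH H2; have : \sum_i \sum_j `|H j i| ^+ 2 = 0.
  rewrite -[RHS](mxtrace0 _ n) -H2 expr2 -mulmxE -[in X in \tr (X *m _)]hH.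
  apply: esym; apply: eq_bigr => i _; rewrite mxE; apply: eq_bigr => j _.
  by rewrite adjmxE normCKC.
have sq0 i j : 0 <= `|H j i| ^+ 2 :> C by rewrite exprn_ge0.
move/psumr_eq0P => col0; apply/matrixP => j i; rewrite mxE.
have /psumr_eq0P/(_ j isT) : \sum_j `|H j i| ^+ 2 = 0.
  by apply: col0 => // k _; rewrite sumr_ge0.
by move=> /(_ (fun k _ => sq0 i k)) /eqP; rewrite sqrf_eq0 normr_eq0 => /eqP.
Qed.

(* if H^(m+2) = 0 then (H^(m+1))^2 = 0, so H^(m+1) = 0 *)
Lemma herm_nilpotent (H : Mat) m : herm H -> H ^+ m.+1 = 0 -> H = 0.
Proof.
move=> hH; elim: m => [|m IH] Hm; first by rewrite -[H]expr1.
apply: IH; apply: herm_sqr_eq0; first exact: herm_expr.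
by rewrite -exprM muln2 -addnn addSnnS exprD Hm mulr0.
Qed.

End NilpotentHermitian.

Section ScalarSpectrum.
Variables (R : realType) (n : nat).
Local Notation C := (R[i]).
Local Notation Mat := ('M[C]_n).

Lemma char_poly_scalar (c : C) : char_poly (c%:M : Mat) = ('X - c%:P) ^+ n.
Proof.
by rewrite /char_poly /char_poly_mx map_scalar_mx /= -raddfB det_scalar.
Qed.

Lemma prod_const_root (c : R) :
  \prod_(i < n) ('X - (((const_mx c : 'rV[R]_n) 0 i)%:C%C)%:P) =
  ('X - (c%:C%C)%:P) ^+ n.
Proof. by under eq_bigr do rewrite mxE; rewrite prodr_const card_ord. Qed.

Lemma eigvals_scalar (c : R) : eigvals_decr ((c%:C%C)%:M : Mat) = const_mx c.
Proof.
apply: xget_unique; first by split=> [i j _|]; rewrite ?mxE // char_poly_scalar prod_const_root.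
move=> v [_ hv]; apply/matrixP => i j; rewrite (ord1 i) mxE.
have : (('X - (c%:C%C)%:P) ^+ n).[(v 0 j)%:C%C] = 0.
  by rewrite -char_poly_scalar hv horner_prod (bigD1 j) //= hornerXsubC subrr mul0r.
rewrite horner_exp hornerXsubC => /eqP; rewrite expf_eq0 => /andP [_].
by rewrite subr_eq0 => /eqP /complexI.
Qed.

End ScalarSpectrum.

Section ConstantSpectrum.
Variables (R : realType) (n' : nat).
Local Notation n := n'.+1.
Local Notation C := (R[i]).
Local Notation Mat := ('M[C]_n).

(* conversely, a nonzero constant spectrum (c, ..., c) forces (A - c I)^n = 0
   by Cayley-Hamilton *)
Lemma const_spectrum_nilpotent (A : Mat) (c : R) : c != 0 ->
  eigvals_decr A = const_mx c -> (A - (c%:C%C)%:M) ^+ n = 0.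
Proof.
move=> c0; rewrite /eigvals_decr; set P := (X in xget _ X) => eA.
have [v Pv] : exists v, P v.
  apply/not_existsP => noP; move: eA; rewrite xgetPN => [/matrixP|v] //.
  by move=> /(_ 0 ord0); rewrite !mxE => /eqP; rewrite eq_sym (negbTE c0).
have := xgetPex 0 (ex_intro _ v Pv); rewrite eA => -[_ chiA].
have := Cayley_Hamilton A; rewrite chiA prod_const_root rmorphXn /= rmorphB /=.
by rewrite horner_mx_X horner_mx_C.
Qed.

End ConstantSpectrum.

Section OrthogonalHermitian.
Variables (R : realType) (n : nat).
Local Notation C := (R[i]).
Local Notation Mat := ('M[C]_n).

Lemma trace_conditions_nontrivial (I : finType) (W : I -> Mat) :
  (#|I| < n * n)%N -> exists2 D : Mat, D != 0 & forall i, \tr (W i *m D) = 0.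
Proof.
move=> hI.
pose A : 'M[C]_(n * n, #|I|) :=
  \matrix_(p, j) \tr (W (enum_val j) *m vec_mx (delta_mx 0 p)).
have Au (u : 'rV[C]_(n * n)) i : (u *m A) 0 (enum_rank i) = \tr (W i *m vec_mx u).
  rewrite mxE {2}(row_sum_delta u) raddf_sum mulmx_sumr raddf_sum.
  apply: eq_bigr => p _.
  by rewrite mxE enum_rankK /= linearZ /= -scalemxAr mxtraceZ.
have kerA : kermx A != 0.
  rewrite -mxrank_eq0 mxrank_ker -lt0n subn_gt0.
  exact: leq_ltn_trans (rank_leq_col _) hI.
have [q nz] : exists q, row q (kermx A) != 0.
  apply/existsP; apply: contraNT kerA => /existsPn noq.
  by apply/eqP/row_matrixP => q; rewrite row0; apply/eqP/negPn/noq.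
exists (vec_mx (row q (kermx A))); first by rewrite vec_mx_eq0.
by move=> i; rewrite -Au -row_mul mulmx_ker row0 mxE.
Qed.

(* for a Hermitian family, a nonzero solution can be taken Hermitian:
   if the Hermitian part D + D^* vanishes, then i (D - D^* ) = 2 i D does not *)
Lemma herm_conditions_nontrivial (I : Type) (W : I -> Mat) (D : Mat) :
  (forall i, herm (W i)) -> D != 0 -> (forall i, \tr (W i *m D) = 0) ->
  exists2 H : Mat, herm H /\ H != 0 & forall i, \tr (W i *m H) = 0.
Proof.
move=> hW D0 trWD.
have trWDa i : \tr (W i *m adjmx D) = 0.
  apply/eqP; rewrite -conjC_eq0 -mxtrace_adj adjmxM adjmxK (hW i).
  by rewrite mxtrace_mulC trWD.
have [hD|hD] := eqVneq (D + adjmx D) 0; last first.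
  exists (D + adjmx D); first by split=> //; rewrite /herm adjmxD adjmxK addrC.
  by move=> i; rewrite mulmxDr mxtraceD trWD trWDa addr0.
exists ('i%C *: (D - adjmx D)); last first.
  by move=> i; rewrite -scalemxAr mxtraceZ mulmxBr mxtraceD raddfN /= trWD trWDa subrr mulr0.
split; first by rewrite /herm adjmxZ adjmxB adjmxK conj_i scaleNr -scalerN opprB.
have aD : adjmx D = - D by apply/eqP; rewrite -addr_eq0 addrC hD.
have -> : D - adjmx D = D *+ 2 by rewrite aD opprK mulr2n.
rewrite scaler_eq0 negb_or -scaler_nat scaler_eq0 negb_or pnatr_eq0 D0 andbT /=.
by rewrite eq_complex /= oner_eq0 andbF.
Qed.

(* fewer than n^2 - 1 Hermitian matrices V_i admit a nonzero traceless
   Hermitian H orthogonal to all of them (the extra condition is tr(I H) = 0) *)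
Lemma traceless_orthogonal (k : nat) (V : 'I_k -> Mat) :
  (forall i, herm (V i)) -> (k.+1 < n * n)%N ->
  exists H : Mat, [/\ herm H, H != 0, \tr H = 0 & forall i, inner (V i) H = 0].
Proof.
move=> hV hk.
pose W (o : option 'I_k) : Mat := if o is Some i then V i else 1%:M.
have hW o : herm (W o) by case: o => [i|]; [exact: hV | exact: herm1].
have [|D D0 trWD] := @trace_conditions_nontrivial _ W.
  by rewrite card_option card_ord.
have [H [hH H0] trWH] := herm_conditions_nontrivial hW D0 trWD.
exists H; split=> //; first by have := trWH None; rewrite mul1mx.
by move=> i; rewrite /inner hV (trWH (Some i)).
Qed.

End OrthogonalHermitian.

Section LowerBound.
Variables (R : realType) (n' : nat).
Local Notation n := n'.+1.
Local Notation C := (R[i]).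
Local Notation Mat := ('M[C]_n).

Lemma maximally_mixed_density : density (((n%:R : R)^-1)%:C%C%:M : Mat).
Proof.
split; last by rewrite mxtrace_scalar -rmorphMn -mulr_natr mulVf ?pnatr_eq0.
rewrite -[X in psd X]addr0; apply: psd_add_scalar; first by rewrite /herm /adjmx trmx0 map_mx0.
have -> : l1norm (0 : Mat) = 0.
  by rewrite /l1norm big1 // => x _; rewrite big1 // => y _; rewrite mxE normr0.
by rewrite invr_ge0 ler0n.
Qed.

Lemma density_perturbation (c : R) (H : Mat) : 0 < c -> density (c%:C%C%:M : Mat) ->
  herm H -> \tr H = 0 -> exists2 t : R, 0 < t & density (c%:C%C%:M + t%:C%C *: H).
Proof.
move=> c0 [_ trc] hH trH; pose t := c / (l1norm H + 1).
have l1H := l1norm_ge0 H.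
have t0 : 0 < t by rewrite divr_gt0 // ltr_wpDl.
exists t => //; split; last by rewrite mxtraceD mxtraceZ trH mulr0 addr0.
apply: psd_add_scalar; first exact: herm_scale.
rewrite l1normZ; last exact: ltW.
rewrite /t mulrAC ler_pdivrMr ?ltr_wpDl // ler_pM2l //; lra.
Qed.

Lemma lower_bound k : k_elicitable (@eigvals_decr R n) k -> (n ^ 2 - 1 <= k)%N.
Proof.
case=> Gh [psi [_ [ident factor]]]; rewrite leqNgt; apply/negP => hk.
pose c : R := (n%:R)^-1; pose rho0 : Mat := c%:C%C%:M.
have c0 : 0 < c by rewrite invr_gt0 ltr0n.
have dens0 : density rho0 := maximally_mixed_density.
have [V [hV level]] := ident (Gh rho0) (ex_intro _ rho0 (conj dens0 erefl)).
have hk' : (k.+1 < n * n)%N by move: hk; rewrite mulnn; lia.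
have [H [hH H0 trH orthH]] := traceless_orthogonal hV hk'.
have [t t0 denst] := density_perturbation c0 dens0 hH trH.
have same_level : Gh (rho0 + t%:C%C *: H) = Gh rho0.
  apply/(level _ denst) => i.
  by rewrite innerDr innerZr orthH mulr0 addr0; apply: (proj1 (level _ dens0)).
have spectrum : eigvals_decr (rho0 + t%:C%C *: H) = const_mx c.
  by rewrite factor // same_level -factor // eigvals_scalar.
have := const_spectrum_nilpotent (lt0r_neq0 c0) spectrum.
rewrite [rho0 + _]addrC addrK => /(herm_nilpotent (herm_scale t hH)) /eqP.
rewrite scaler_eq0 (negbTE H0) orbF -(rmorph0 (real_complex R)) (inj_eq (@complexI R)).
by rewrite gt_eqF.
Qed.

End LowerBound.

Lemma quadratic_score_proper (R : realFieldType) k (g r : 'rV[R]_k) : r != g ->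
  \sum_i (2 * r 0 i * g 0 i - r 0 i ^+ 2) < \sum_i (2 * g 0 i * g 0 i - g 0 i ^+ 2).
Proof.
move=> rg; rewrite -subr_gt0 -sumrB.
have [j hj] : exists j, r 0 j != g 0 j.
  apply/existsP; apply: contraNT rg => /existsPn same.
  by apply/eqP/rowP => j; apply/eqP/negPn/same.
rewrite (eq_bigr (fun i => (g 0 i - r 0 i) ^+ 2)) => [|i _]; last by rewrite sqrrB; ring.
rewrite (bigD1 j) //= ltr_pwDl ?sumr_ge0 // => [|i _]; last exact: sqr_ge0.
by rewrite exprn_even_gt0 //= subr_eq0 eq_sym.
Qed.

Section UpperBound.
Variables (R : realType) (n' : nat).
Local Notation n := n'.+1.
Local Notation C := (R[i]).
Local Notation Mat := ('M[C]_n).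
Local Notation K := (n ^ 2 - 1)%N.

(* i < n^2 - 1 encodes the pair (i / n, i mod n); only (n-1, n-1) is missed *)
Definition coord_row (i : 'I_K) : 'I_n := inord (i %/ n).
Definition coord_col (i : 'I_K) : 'I_n := inord (i %% n).
Definition coord_mx (i : 'I_K) : Mat := @basis_mx R n (coord_row i) (coord_col i).

Definition coords (rho : Mat) : 'rV[R]_K := \row_i inner (coord_mx i) rho.

Lemma coord_index_onto (a b : 'I_n) : ~~ ((a == ord_max) && (b == ord_max)) ->
  exists i : 'I_K, coord_row i = a /\ coord_col i = b.
Proof.
move=> ab; have a_le : (a <= n')%N := ltn_ord a.
have b_le : (b <= n')%N := ltn_ord b.
have small : (a < n')%N || (b < n')%N.
  by move: ab; rewrite -!val_eqE /= !ltn_neqAle a_le b_le !andbT negb_and.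
have lt_K : (a * n + b < K)%N.
  have a_n : (a * n <= n' * n)%N by rewrite leq_mul2r a_le orbT.
  case/orP: small => [a_lt|b_lt]; last by rewrite -mulnn; lia.
  have : (a * n + n <= n' * n)%N by rewrite -mulSnr leq_mul2r a_lt orbT.
  by rewrite -mulnn; lia.
exists (Ordinal lt_K); split; apply: val_inj; rewrite /= inordK.
- by rewrite divnMDl // divn_small // addn0.
- by rewrite divnMDl // divn_small // addn0 ltnS.
- by rewrite modnMDl modn_small.
- by rewrite ltn_pmod.
Qed.

Lemma coords_inj (rho sigma : Mat) : density rho -> density sigma ->
  coords rho = coords sigma -> rho = sigma.
Proof.
move=> [[hr _] tr] [[hs _] ts] same; apply/eqP; rewrite -subr_eq0; apply/eqP.
apply: (@basis_mx_coords0 _ _ ord_max); first exact: herm_sub.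
  by rewrite mxtraceD raddfN /= tr ts subrr.
move=> a b /coord_index_onto [i [<- <-]].
have /(congr1 (fun v : 'rV[R]_K => v 0 i)) := same.
by rewrite !mxE innerBr => ->; rewrite subrr.
Qed.

Lemma coords_elicitable : elicitable coords.
Proof.
pose A (r : 'rV[R]_K) : Mat :=
  \sum_i ((2 * r 0 i)%:C%C *: coord_mx i - (r 0 i ^+ 2)%:C%C *: 1%:M).
have hA r : herm (A r).
  apply: herm_sum => i; apply: herm_sub; apply: herm_scale.
    exact: basis_mx_herm.
  exact: herm1.
have [s [mu [meas score]]] := linear_score_realizable hA.
exists s, mu; split => // rho dens r r_ne.
have scoreE r' : exp_score s mu r' rho =
    \sum_i (2 * r' 0 i * coords rho 0 i - r' 0 i ^+ 2).
  rewrite score /A inner_suml; apply: eq_bigr => i _.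
  by rewrite innerBl !innerZl inner_density // mxE mulr1.
rewrite !scoreE; apply: quadratic_score_proper; exact/eqP.
Qed.

Lemma coords_identifiable : identifiable coords.
Proof.
move=> r _; exists (fun i => coord_mx i - (r 0 i)%:C%C *: 1%:M); split.
  by move=> i; apply: herm_sub; [exact: basis_mx_herm | apply/herm_scale/herm1].
move=> rho dens; have levelE i : inner (coord_mx i - (r 0 i)%:C%C *: 1%:M) rho =
    coords rho 0 i - r 0 i.
  by rewrite innerBl innerZl inner_density // mulr1 mxE.
split=> [same i|zero]; first by rewrite /= levelE same subrr.
by apply/rowP => i; apply/eqP; rewrite -subr_eq0 -levelE zero.
Qed.

(* lambda(rho) = lambda(the unique density with the same coordinates) *)
Lemma upper_bound : k_elicitable (@eigvals_decr R n) K.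
Proof.
pose psi r := eigvals_decr (xget 0 (fun rho : Mat => density rho /\ coords rho = r)).
exists coords, psi; split; first exact: coords_elicitable.
split=> [|rho dens]; first exact: coords_identifiable.
have [dens' same] := xgetPex (0 : Mat) (ex_intro (fun x : Mat =>
  density x /\ coords x = coords rho) rho (conj dens erefl)).
by rewrite /psi (coords_inj dens' dens same).
Qed.

End UpperBound.

Theorem corollary6p6 (R : realType) (n : nat) (hn : (0 < n)%N) :
  elicQ_eq (@eigvals_decr R n) (n ^ 2 - 1).
Proof.
case: n hn => [//|n'] _; split; first exact: upper_bound.
exact: lower_bound.
Qed.
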